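(* Let $(\breve N,\breve g,\breve P)$ be a Golden semi-Riemannian manifold. Then $\breve N$ admits no $1$-lightlike transversal lightlike submanifold. That is, there is no transversal lightlike submanifold $\acute N$ with $\operatorname{rank}(\mathrm{Rad}\,T\acute N)=1$.
   Context: A Golden semi-Riemannian manifold is $(\breve N,\breve g,\breve P)$ with $\breve P^2=\breve P+I$ and $\breve g(\breve PX,Y)=\breve g(X,\breve PY)$. Lightlike submanifold $(\acute N,g,S(T\acute N),S(T\acute N^\perp))$: the induced metric is degenerate with radical $\mathrm{Rad}\,T\acute N=T\acute N\cap T\acute N^\perp$ of constant rank $r\ge1$. The screen $S(T\acute N)$ is non-degenerate with $T\acute N=\mathrm{Rad}\,T\acute N\perp S(T\acute N)$. The screen transversal bundle $S(T\acute N^\perp)$ is a complement of $\mathrm{Rad}\,T\acute N$ in $T\acute N^\perp$. The lightlike transversal bundle $ltr(T\acute N)$ is locally spanned by $N_i$ with $\breve g(N_i,\xi_j)=\delta_{ij}$ and $\breve g(N_i,N_j)=0$, and is orthogonal to $S(T\acute N)$ and $S(T\acute N^\perp)$. The submanifold is $r$-lightlike if $\operatorname{rank}\mathrm{Rad}\,T\acute N=r$. A transversal lightlike submanifold is one with $\breve P(\mathrm{Rad}\,T\acute N)=ltr(T\acute N)$ and $\breve P(S(T\acute N))\subseteq S(T\acute N^\perp)$. *)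

(* Pointwise (tangent-space) linear-algebra model of a
   Golden semi-Riemannian manifold and of a transversal lightlike
   submanifold. *)
From HB Require Import structures.
From mathcomp Require Import all_boot all_order all_algebra.
Set Implicit Arguments. Unset Strict Implicit. Unset Printing Implicit Defensive.
Import Order.TTheory GRing.Theory Num.Theory.
Local Open Scope ring_scope.

(* vectors of the ambient tangent space are row vectors 'rV[R]_n;
   the metric is given by its Gram matrix G: g(x,y) = x G y^T *)
Definition form (R : realFieldType) (n : nat) (G : 'M[R]_n) (x y : 'rV[R]_n) : R :=
  (x *m G *m y^T) 0 0.

(* Golden semi-Riemannian structure (on one tangent space):
   g symmetric non-degenerate (any index), P^2 = P + I, g(PX,Y) = g(X,PY).
   Endomorphisms act on row vectors on the right: PX := x *m P. *)
Definition golden_semi_riemannian (R : realFieldType) (n : nat) (G P : 'M[R]_n) : Prop :=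
  [/\ G^T = G, G \in unitmx, P *m P = P + 1%:M &
      forall x y : 'rV[R]_n, form G (x *m P) y = form G x (y *m P)].

(* Subspaces are represented by (row spaces of) matrices, mxalgebra style.
   TN = tangent space of the submanifold, TNp = TN^perp, S = S(TN),
   Sp = S(TN^perp), rows of xi = basis xi_1..xi_r of Rad TN,
   rows of Nv = N_1..N_r spanning ltr(TN). *)
Definition lightlike_submanifold (R : realFieldType) (n : nat) (G : 'M[R]_n)
    (TN TNp S Sp : 'M[R]_n) (r : nat) (xi Nv : 'M[R]_(r, n)) : Prop :=
  [/\
      (forall x : 'rV[R]_n,
         (x <= TNp)%MS <-> (forall y : 'rV[R]_n, (y <= TN)%MS -> form G y x = 0)),
      [/\ (1 <= r)%N, \rank (TN :&: TNp)%MS = r,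
          (xi == (TN :&: TNp))%MS & row_free xi],
      [/\ (S :&: (TN :&: TNp) == (0 : 'M[R]_n))%MS, (S + (TN :&: TNp) == TN)%MS &
          forall x : 'rV[R]_n, (x <= S)%MS ->
            (forall y : 'rV[R]_n, (y <= S)%MS -> form G x y = 0) -> x = 0],
      (Sp :&: (TN :&: TNp) == (0 : 'M[R]_n))%MS /\ (Sp + (TN :&: TNp) == TNp)%MS &
      [/\ forall i j : 'I_r, form G (row i Nv) (row j xi) = (i == j)%:R,
          forall i j : 'I_r, form G (row i Nv) (row j Nv) = 0,
          forall (i : 'I_r) (y : 'rV[R]_n), (y <= S)%MS -> form G (row i Nv) y = 0 &
          forall (i : 'I_r) (y : 'rV[R]_n), (y <= Sp)%MS -> form G (row i Nv) y = 0]].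

Definition transversal_lightlike (R : realFieldType) (n : nat) (G P : 'M[R]_n)
    (TN TNp S Sp : 'M[R]_n) (r : nat) (xi Nv : 'M[R]_(r, n)) : Prop :=
  [/\ lightlike_submanifold G TN TNp S Sp xi Nv,
      (xi *m P == Nv)%MS &
      (S *m P <= Sp)%MS].

(* For r = 1 the radical is spanned by a null vector xi and, since
   P(Rad) = ltr, the transversal vector is N = c P xi for a scalar c. The golden
   identity P^2 = P + I together with g(xi, xi) = 0 gives g(P xi, P xi) = g(P xi, xi),
   hence g(N, N) = c g(N, xi). The normalisations g(N, xi) = 1 and g(N, N) = 0 then
   force c = 0, contradicting g(N, xi) = 1. *)
From Pilot Require Import Defs.
From HB Require Import structures.
From mathcomp Require Import all_boot all_order all_algebra.
Set Implicit Arguments.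
Unset Strict Implicit.
Unset Printing Implicit Defensive.

Import Order.TTheory GRing.Theory Num.Theory.
Local Open Scope ring_scope.

(* [form] alone would resolve to [sesquilinear.form]. *)
Local Notation form := Defs.form.

Section BilinearForm.
Variables (R : realFieldType) (n : nat) (G : 'M[R]_n).

Lemma formZl a (x y : 'rV[R]_n) : form G (a *: x) y = a * form G x y.
Proof. by rewrite /form -!scalemxAl mxE. Qed.

Lemma formDr (x y z : 'rV[R]_n) : form G x (y + z) = form G x y + form G x z.
Proof. by rewrite /form linearD /= mulmxDr mxE. Qed.

Lemma formC : G^T = G -> forall x y : 'rV[R]_n, form G x y = form G y x.
Proof.
move=> GT x y; rewrite /form.
transitivity ((x *m G *m y^T)^T 0 0); first by rewrite [RHS]mxE.
by rewrite !trmx_mul trmxK GT mulmxA.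
Qed.

Lemma formZr a (x y : 'rV[R]_n) : G^T = G -> form G x (a *: y) = a * form G x y.
Proof. by move=> GT; rewrite formC // formZl formC. Qed.

End BilinearForm.

Section GoldenStructure.
Variables (R : realFieldType) (n : nat) (G P : 'M[R]_n).
Hypothesis golden : golden_semi_riemannian G P.

Lemma golden_formPP (x y : 'rV[R]_n) :
  form G (x *m P) (y *m P) = form G x (y *m P) + form G x y.
Proof.
case: golden => _ _ PP Psym.
by rewrite Psym -mulmxA PP mulmxDr mulmx1 formDr.
Qed.

Lemma golden_form_scaled_null (c : R) (x : 'rV[R]_n) :
  form G x x = 0 ->
  form G (c *: (x *m P)) (c *: (x *m P)) = c * form G (c *: (x *m P)) x.
Proof.
case: golden => GT _ _ _ xx0.
by rewrite formZr // !formZl golden_formPP xx0 addr0 (formC GT x).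
Qed.

End GoldenStructure.

Section LightlikeSubmanifold.
Variables (R : realFieldType) (n r : nat) (G TN TNp S Sp : 'M[R]_n).
Variables (xi Nv : 'M[R]_(r, n)).

Lemma lightlike_radical_form0 i j :
  lightlike_submanifold G TN TNp S Sp xi Nv -> form G (row i xi) (row j xi) = 0.
Proof.
case=> HTNp [_ _ /andP[xi_rad _] _] _ _ _.
have row_rad k : (row k xi <= TN :&: TNp)%MS := submx_trans (row_sub k xi) xi_rad.
apply: (proj1 (HTNp _)); first by have := row_rad j; rewrite sub_capmx => /andP[].
by have := row_rad i; rewrite sub_capmx => /andP[].
Qed.

End LightlikeSubmanifold.

Lemma transversal_ltr_scaled (R : realFieldType) (n : nat) (G P TN TNp S Sp : 'M[R]_n)
    (xi Nv : 'rV[R]_n) :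
  transversal_lightlike G P TN TNp S Sp xi Nv -> exists c : R, Nv = c *: (xi *m P).
Proof. by case=> _ /andP[_ /sub_rVP]. Qed.

Theorem mainTheorem9 (R : realFieldType) (n : nat) (G P : 'M[R]_n) :
  golden_semi_riemannian G P ->
  ~ (exists (TN TNp S Sp : 'M[R]_n) (xi Nv : 'M[R]_(1, n)),
        transversal_lightlike G P TN TNp S Sp xi Nv).
Proof.
move=> golden [TN [TNp [S [Sp [xi [Nv transv]]]]]].
have [c Nv_def] := transversal_ltr_scaled transv.
have [lightlike _ _] := transv.
have [_ _ _ _ [Nv_xi Nv_Nv _ _]] := lightlike.
have xi_null : form G xi xi = 0.
  by have := lightlike_radical_form0 0 0 lightlike; rewrite row_id.
have Nxi1 : form G Nv xi = 1 by have := Nv_xi 0 0; rewrite !row_id.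
have NN0 : form G Nv Nv = 0 by have := Nv_Nv 0 0; rewrite row_id.
move: NN0; rewrite {1 2}Nv_def golden_form_scaled_null // -Nv_def Nxi1 mulr1 => c0.
by move: Nxi1; rewrite Nv_def formZl c0 mul0r => /eqP; rewrite eq_sym oner_eq0.
Qed.
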